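(* Let $k\ge2$ and let $\phi$ be a monotone $[k]$-edge-labeling of $K^{(2)}_n$ that minimizes the number of bad triples among all monotone $[k]$-edge-labelings of $K^{(2)}_n$. Then for every $2\le i\le k$, $$|X_i|+|X_{i+1}|\le|X_{i-2}|+|X_{i-1}|+2.$$
   Context: $K^{(2)}_n$ is the complete graph on $[n]$ with its natural order. A $[k]$-edge-labeling $\phi$ assigns to each pair $uv$ ($u<v$) a label $\phi(uv)\in\{1,\dots,k\}$; it is monotone if $\phi(uv)\le\phi(vw)$ whenever $u<v<w$. A triple $u<v<w$ is good if $\phi(uv)<\phi(vw)$ and bad otherwise. Define $\Phi_L(1)=0$ and $\Phi_L(v)=\max\{\phi(uv):u<v\}$ for $v>1$. For $0\le i\le k+1$ let $X_i=\{v\in[n]:\Phi_L(v)=i\}$. *)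

(* Vertices of K_n are 'I_n (vertex v+1 of the paper is v : 'I_n),
   ordered by their natural value. *)
From mathcomp Require Import all_boot.
Set Implicit Arguments. Unset Strict Implicit. Unset Printing Implicit Defensive.

(* phi u v is the label of the edge uv for u < v; values at u >= v are irrelevant. *)
Definition is_labeling (n k : nat) (phi : 'I_n -> 'I_n -> nat) : Prop :=
  forall u v : 'I_n, u < v -> 1 <= phi u v <= k.

Definition is_monotone (n : nat) (phi : 'I_n -> 'I_n -> nat) : Prop :=
  forall u v w : 'I_n, u < v -> v < w -> phi u v <= phi v w.

Definition bad_triples (n : nat) (phi : 'I_n -> 'I_n -> nat) : {set 'I_n * 'I_n * 'I_n} :=
  [set t : 'I_n * 'I_n * 'I_n | [&& t.1.1 < t.1.2, t.1.2 < t.2 & ~~ (phi t.1.1 t.1.2 < phi t.1.2 t.2)]].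

Definition num_bad (n : nat) (phi : 'I_n -> 'I_n -> nat) : nat := #|bad_triples phi|.

Definition is_optimal (n k : nat) (phi : 'I_n -> 'I_n -> nat) : Prop :=
  [/\ is_labeling k phi, is_monotone phi &
      forall psi : 'I_n -> 'I_n -> nat, is_labeling k psi -> is_monotone psi -> num_bad phi <= num_bad psi].

(* Phi_L(v) = max_{u<v} phi(uv), and 0 for the first vertex (empty max). *)
Definition PhiL (n : nat) (phi : 'I_n -> 'I_n -> nat) (v : 'I_n) : nat :=
  \max_(u : 'I_n | u < v) phi u v.

Definition X (n : nat) (phi : 'I_n -> 'I_n -> nat) (i : nat) : {set 'I_n} :=
  [set v | PhiL phi v == i].

(** Let y be the first vertex of X_i, and lower the labels i of the edges into y to i - 1,
    the labels i + 1 of the edges from y into X_(i+1) to i, and the labels i - 1 of the edges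
    from X_(<= i-3) into X_(i-1) to i - 2; this is again a monotone [k]-labeling.
    Every triple (t, y, x) with both labels i, and every triple (y, v, x) with v < x in the
    part X_up of X_(i+1) reached from y by label i + 1, turns from bad to good.  The only
    triples that turn bad are the (t, v, y) with v in the part X_down of X_(i-1) sending
    label i to y, and, thanks to the third modification, t in X_(i-2) or X_(i-1).  Hence
    optimality gives
      |into y| |out of y| + C(|X_up|, 2)
        <= |X_down| (|X_(i-2)| + |X_(i-1)| - |X_down|) + C(|X_down|, 2),
    and as 1, |X_down| <= |into y| and |X_i| + |X_(i+1)| <= |out of y| + |X_up| + 1, the
    bound follows by elementary arithmetic.  If X_i is empty, the bound at i + 1 suffices. *)

From mathcomp Require Import all_boot zify.
Set Implicit Arguments. Unset Strict Implicit. Unset Printing Implicit Defensive.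

Definition pairs n (A : {set 'I_n}) : {set 'I_n * 'I_n} :=
  [set p | [&& p.1 \in A, p.2 \in A & p.1 < p.2]].

Lemma card_pairs n (A : {set 'I_n}) : 2 * #|pairs A| + #|A| = #|A| * #|A|.
Proof.
have pairsE : #|pairs A| = \sum_(a in A) \sum_(b in A) (a < b).
  rewrite -sum1_card pair_big_dep big_mkcond [RHS]big_mkcond.
  by apply: eq_bigr => -[a b] _; rewrite !inE; case: (a \in A); case: (b \in A); case: (a < b).
have diagE : #|A| = \sum_(a in A) \sum_(b in A) (a == b).
  rewrite -sum1_card; apply: eq_bigr => a aA.
  by rewrite (bigD1 a) //= eqxx big1 // => b /andP[_ /negbTE]; rewrite eq_sym => ->.
have squareE : #|A| * #|A| = \sum_(a in A) \sum_(b in A) 1.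
  rewrite -[in X in X * _](sum1_card (mem A)) big_distrl /=.
  by apply: eq_bigr => a _; rewrite mul1n sum1_card.
rewrite squareE mul2n -addnn {2}pairsE exchange_big pairsE diagE -!big_split.
apply: eq_bigr => a _; rewrite -!big_split.
by apply: eq_bigr => b _ /=; rewrite -val_eqE; case: ltngtP.
Qed.

Lemma bad_triples_exchange n (phi psi : 'I_n -> 'I_n -> nat) :
  num_bad phi <= num_bad psi ->
  #|bad_triples phi :\: bad_triples psi| <= #|bad_triples psi :\: bad_triples phi|.
Proof.
rewrite /num_bad -(cardsID (bad_triples psi) (bad_triples phi)).
by rewrite -(cardsID (bad_triples phi) (bad_triples psi)) setIC leq_add2l.
Qed.

Lemma pair_count_arith (a b h m o q ph pm : nat) :
  0 < q -> h <= q -> h <= b -> 2 * ph + h = h * h -> 2 * pm + m = m * m ->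
  q * o + pm <= a * h + ph + (b - h) * h -> o + m <= a + b + 1.
Proof.
move=> q_gt0 hq hb ph_E pm_E; rewrite mulnBl => count.
have [h0 | h_gt0] := posnP h.
  subst h; have pm0 : pm = 0 by lia.
  have m_le1 : m <= 1 by case: m pm_E => [|[|m]] //; rewrite pm0; nia.
  have /eqP : q * o = 0 by lia.
  by rewrite muln_eq0 => /orP[/eqP|/eqP]; lia.
have ho : h * o <= q * o by rewrite leq_mul2r hq orbT.
have hh : h * h <= b * h by rewrite leq_mul2r hb orbT.
have sq : 2 * (h * m) + m <= h * h + m * m + h.
  have e_sq : m - h <= (m - h) * (m - h) by case: (m - h) => // e; rewrite leq_pmulr.
  nia.
rewrite leqNgt; apply/negP => big_om.
have : h * (a + b + 2) <= h * (o + m) by apply: leq_mul => //; lia.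
rewrite !mulnDr; nia.
Qed.

Section PhiL.
Variables (n : nat) (phi : 'I_n -> 'I_n -> nat).
Local Notation F := (PhiL phi).

Lemma phi_le_PhiL (u v : 'I_n) : u < v -> phi u v <= F v.
Proof. by move=> uv; apply: (@leq_bigmax_cond _ (fun t : 'I_n => t < v)). Qed.

Lemma PhiL_attained (v : 'I_n) : 0 < F v -> exists2 u : 'I_n, u < v & phi u v = F v.
Proof.
move=> Fv_gt0; have [u uv | none] := pickP [pred u : 'I_n | u < v]; last first.
  by move: Fv_gt0; rewrite /PhiL big_pred0.
have /(eq_bigmax_cond (fun t => phi t v)) [w wv Fv] : 0 < #|[pred u : 'I_n | u < v]|.
  by apply/card_gt0P; exists u.
by exists w.
Qed.

Hypothesis mono : is_monotone phi.

Lemma PhiL_le_phi (u v : 'I_n) : u < v -> F u <= phi u v.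
Proof. by move=> uv; apply/bigmax_leqP => t tu; apply: mono tu uv. Qed.

Lemma PhiL_monotone (u v : 'I_n) : u <= v -> F u <= F v.
Proof.
rewrite leq_eqVlt => /orP[/eqP/val_inj-> // | uv].
exact: leq_trans (PhiL_le_phi uv) (phi_le_PhiL uv).
Qed.

Lemma lt_of_PhiL_lt (u v : 'I_n) : F u < F v -> u < v.
Proof. by apply: contraTT; rewrite -!leqNgt; apply: PhiL_monotone. Qed.

Lemma phi_eq_PhiL (u v : 'I_n) j : u < v -> F u = j -> F v = j -> phi u v = j.
Proof. by move=> uv Fu Fv; apply/eqP; rewrite eqn_leq -{1}Fv -Fu phi_le_PhiL ?PhiL_le_phi. Qed.

End PhiL.

Section Relabel.
Variables (n k : nat) (phi : 'I_n -> 'I_n -> nat) (i : nat) (y : 'I_n).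
Hypotheses (lab : is_labeling k phi) (mono : is_monotone phi) (i_ge2 : 2 <= i).
Hypotheses (Fy : PhiL phi y = i) (ymin : forall v : 'I_n, PhiL phi v = i -> y <= v).
Local Notation F := (PhiL phi).

Definition relabel (u v : 'I_n) : nat :=
  if v == y then (if phi u y == i then i.-1 else phi u y)
  else if [&& u == y, phi y v == i.+1 & F v == i.+1] then i
  else if [&& F v == i.-1, F u + 3 <= i & phi u v == i.-1] then i - 2
  else phi u v.

Lemma PhiL_before_y (t : 'I_n) : t < y -> F t <= i.-1.
Proof.
move=> ty; have := PhiL_monotone mono (ltnW ty); rewrite Fy.
have : F t != i by apply: contraTneq ty => /ymin; rewrite leqNgt.
lia.
Qed.

Lemma relabel_le (u v : 'I_n) : relabel u v <= phi u v.
Proof.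
rewrite /relabel; case: eqP => [-> | _]; first by case: eqP => [-> | ]; lia.
case: ifP => [/and3P[/eqP-> /eqP ? _] | _]; first lia.
by case: ifP => [/and3P[_ _ /eqP ?] | _]; lia.
Qed.

Lemma relabel_id (u v : 'I_n) : u != y -> v != y -> F v != i.-1 -> relabel u v = phi u v.
Proof. by move=> uNy vNy FvN; rewrite /relabel (negbTE uNy) (negbTE vNy) (negbTE FvN). Qed.

Lemma relabel_to_y (t : 'I_n) : t < y -> relabel t y <= i.-1.
Proof.
move=> ty; have := phi_le_PhiL phi ty; rewrite /relabel eqxx Fy.
by case: eqP => [_ | ]; lia.
Qed.

Lemma relabel_from_y (x : 'I_n) : y < x -> i <= relabel y x.
Proof.
move=> yx; have := PhiL_monotone mono (ltnW yx); have := PhiL_le_phi mono yx.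
rewrite /relabel -[x == y]val_eqE gtn_eqF // eqxx Fy /=; case: ifP => // _.
by case: ifP => [/and3P[/eqP -> _ _] | _]; lia.
Qed.

Lemma relabel_labeling : is_labeling k relabel.
Proof.
move=> u v uv; have /andP[phi_ge1 phi_lek] := lab uv.
rewrite (leq_trans (relabel_le u v)) // andbT /relabel.
case: eqP => [vy | _]; first by rewrite -vy; case: eqP; lia.
case: ifP => _; first lia.
by case: ifP => [/and3P[_ ? _] | _]; lia.
Qed.

Lemma relabel_monotone : is_monotone relabel.
Proof.
move=> u v w uv vw; have := relabel_le u v.
have [vy | /eqP vNy] := v =P y.
  by subst v; have := relabel_to_y uv; have := relabel_from_y vw; lia.
have [wy | /eqP wNy] := w =P y.
  subst w; have := PhiL_before_y vw; have := phi_le_PhiL phi uv; have := mono uv vw.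
  by rewrite [relabel v y]/relabel eqxx; case: eqP; lia.
have := mono uv vw; have := phi_le_PhiL phi uv.
rewrite [relabel v w]/relabel (negbTE wNy) (negbTE vNy) /=.
by case: ifP => [/and3P[_ ? _] | _]; lia.
Qed.

Definition into_y := [set t : 'I_n | (t < y) && (phi t y == i)].
Definition out_of_y := [set x : 'I_n | (y < x) && (phi y x == i)].
Definition X_up := [set v in X phi i.+1 | phi y v == i.+1].
Definition X_down := [set v in X phi i.-1 | phi v y == i].

Definition destroyed := bad_triples phi :\: bad_triples relabel.
Definition created := bad_triples relabel :\: bad_triples phi.

Lemma destroyed_through_y :
  [set ((p.1, y), p.2) | p in setX into_y out_of_y] \subset destroyed.
Proof.
apply/subsetP => _ /imsetP[[t x] /setXP[+ +] ->].
rewrite !inE => /andP[ty /eqP pty] /andP[yx /eqP pyx].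
rewrite /= ty yx pty pyx ltnn /= -ltnNge.
by have := relabel_to_y ty; have := relabel_from_y yx; lia.
Qed.

Lemma destroyed_above_y : [set ((y, p.1), p.2) | p in pairs X_up] \subset destroyed.
Proof.
apply/subsetP => _ /imsetP[[v x] + ->].
rewrite !inE /= => /and3P[/andP[/eqP Fv /eqP pyv] /andP[/eqP Fx _] vx].
have yv : y < v by apply: (lt_of_PhiL_lt mono); rewrite Fy Fv.
have yx := ltn_trans yv vx.
have pvx : phi v x = i.+1 := phi_eq_PhiL mono vx Fv Fx.
have rel_yv : relabel y v = i.
  by rewrite /relabel -[v == y]val_eqE gtn_eqF // eqxx pyv Fv !eqxx.
have rel_vx : relabel v x = i.+1.
  by rewrite relabel_id -?val_eqE ?gtn_eqF ?Fx //; lia.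
by rewrite yv vx pyv pvx rel_yv rel_vx ltnSn ltnn.
Qed.

Lemma card_destroyed : #|into_y| * #|out_of_y| + #|pairs X_up| <= #|destroyed|.
Proof.
set G1 := [set ((p.1, y), p.2) | p in setX into_y out_of_y].
set G2 := [set ((y, p.1), p.2) | p in pairs X_up].
have G12_disj : [disjoint G1 & G2].
  rewrite disjoints_subset; apply/subsetP => _ /imsetP[[t x] _ ->].
  rewrite !inE; apply/imsetP => -[[v x'] + [_ yv _]].
  by rewrite !inE -yv Fy /= => /andP[/andP[/eqP]]; lia.
have card_G1 : #|G1| = #|into_y| * #|out_of_y|.
  by rewrite card_imset ?cardsX // => -[t x] [t' x'] [-> ->].
have card_G2 : #|G2| = #|pairs X_up|.
  by rewrite card_imset // => -[v x] [v' x'] [-> ->].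
have [_] := leq_card_setU G1 G2; rewrite G12_disj card_G1 card_G2 => /eqP <-.
by apply/subset_leq_card; rewrite subUset destroyed_through_y destroyed_above_y.
Qed.

Lemma created_triple (t v x : 'I_n) :
  ((t, v), x) \in created -> [/\ x = y, v \in X_down, t < v & relabel t v = i.-1].
Proof.
rewrite !inE /= => /andP[+ /and3P[tv vx]]; rewrite tv vx /= negbK -leqNgt => phi_lt rel_le.
have rel_lt : relabel v x < phi v x by have := relabel_le t v; lia.
have := relabel_le t v; have := phi_le_PhiL phi tv.
have [xy | /eqP xNy] := x =P y.
  subst x; have := PhiL_before_y vx.
  move: rel_lt rel_le; rewrite [relabel v y]/relabel eqxx; case: eqP => [pvy | ]; last lia.
  move=> *; have Fv : F v = i.-1 by lia.
  by split; rewrite // ?inE ?Fv ?pvy ?eqxx //; lia.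
have [vy | /eqP vNy] := v =P y.
  by subst v; have := relabel_to_y tv; have := relabel_from_y vx; lia.
move: rel_lt rel_le; rewrite [relabel v x]/relabel (negbTE xNy) (negbTE vNy) /=.
by case: ifP => [/and3P[_ ? _] | _]; [lia | rewrite ltnn].
Qed.

Lemma source_of_relabel_into_X_down (t v : 'I_n) :
  v \in X_down -> t < v -> relabel t v = i.-1 -> t \in X phi (i - 2) :|: X phi i.-1.
Proof.
rewrite !inE => /andP[/eqP Fv _] tv.
have vy : v < y by apply: (lt_of_PhiL_lt mono); rewrite Fv Fy; lia.
have vNy : v != y by rewrite neq_ltn vy.
have tNy : t != y by rewrite neq_ltn (ltn_trans tv vy).
have := PhiL_le_phi mono tv; have := phi_le_PhiL phi tv.
rewrite /relabel (negbTE vNy) (negbTE tNy) Fv eqxx /=.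
by case: ifP => [_ | /negbT]; lia.
Qed.

Lemma created_sub :
  created \subset [set (p, y) | p in setX (X phi (i - 2)) X_down :|: pairs X_down
                                    :|: setX (X phi i.-1 :\: X_down) X_down].
Proof.
apply/subsetP => -[[t v] x] /created_triple[-> vXd tv rel_tv].
apply/imsetP; exists (t, v) => //.
rewrite !in_setU !in_setX in_setD [_ \in pairs _]inE /= vXd tv !andbT.
case/setUP: (source_of_relabel_into_X_down vXd tv rel_tv) => -> //.
by case: (t \in X_down); rewrite ?orbT.
Qed.

Lemma X_down_sub : X_down \subset X phi i.-1.
Proof. by apply/subsetP => v; rewrite inE => /andP[]. Qed.

Lemma card_created :
  #|created| <= #|X phi (i - 2)| * #|X_down| + #|pairs X_down|
                 + (#|X phi i.-1| - #|X_down|) * #|X_down|.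
Proof.
apply: (leq_trans (subset_leq_card created_sub)).
rewrite card_imset => [|p q [] //].
rewrite -(cardsDS X_down_sub) -!cardsX.
by apply: (leq_trans (leq_card_setU _ _)); rewrite leq_add2r leq_card_setU.
Qed.

Lemma X_down_sub_into_y : X_down \subset into_y.
Proof.
apply/subsetP => v; rewrite !inE => /andP[/eqP Fv ->]; rewrite andbT.
by apply: (lt_of_PhiL_lt mono); rewrite Fv Fy; lia.
Qed.

Lemma into_y_gt0 : 0 < #|into_y|.
Proof.
have [|t ty pty] := @PhiL_attained _ phi y; first by rewrite Fy; lia.
by apply/card_gt0P; exists t; rewrite inE ty pty Fy /=.
Qed.

Lemma card_X_i_succ : #|X phi i| + #|X phi i.+1| <= #|out_of_y| + #|X_up| + 1.
Proof.
have X_disj : [disjoint X phi i & X phi i.+1].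
  by rewrite -setI_eq0; apply/eqP/setP => v; rewrite !inE; case: eqP => // ->; lia.
have X_sub : X phi i :|: X phi i.+1 \subset y |: (out_of_y :|: X_up).
  apply/subsetP => v; rewrite !inE => /orP[/eqP Fv | /eqP Fv].
    have [// | vNy] := eqVneq v y.
    have yv : y < v by rewrite ltn_neqAle ymin // andbT eq_sym; exact: vNy.
    by rewrite yv (phi_eq_PhiL mono yv Fy Fv) eqxx.
  have yv : y < v by apply: (lt_of_PhiL_lt mono); rewrite Fy Fv.
  have := PhiL_le_phi mono yv; have := phi_le_PhiL phi yv.
  rewrite yv Fy Fv eqxx /=; case: eqP; lia.
have [_] := leq_card_setU (X phi i) (X phi i.+1); rewrite X_disj => /eqP <-.
rewrite (leq_trans (subset_leq_card X_sub)) // cardsU1 addnC.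
by apply: leq_add; [apply: leq_card_setU | apply: leq_b1].
Qed.

Hypothesis opt : forall psi : 'I_n -> 'I_n -> nat,
  is_labeling k psi -> is_monotone psi -> num_bad phi <= num_bad psi.

Lemma optimal_card_X : #|X phi i| + #|X phi i.+1| <= #|X phi (i - 2)| + #|X phi i.-1| + 2.
Proof.
have destroyed_le_created := bad_triples_exchange (opt relabel_labeling relabel_monotone).
have := leq_trans card_destroyed (leq_trans destroyed_le_created card_created).
move/(pair_count_arith into_y_gt0 (subset_leq_card X_down_sub_into_y)
        (subset_leq_card X_down_sub) (card_pairs _) (card_pairs _)).
by have := card_X_i_succ; lia.
Qed.

End Relabel.

Lemma optimal_card_X_nonempty n k (phi : 'I_n -> 'I_n -> nat) i :
  is_optimal k phi -> 2 <= i -> X phi i != set0 ->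
  #|X phi i| + #|X phi i.+1| <= #|X phi (i - 2)| + #|X phi i.-1| + 2.
Proof.
case=> lab mono opt i_ge2 /set0Pn[y0]; rewrite inE => Fy0.
have [y /eqP Fy ymin] := @arg_minnP _ y0 (fun v => PhiL phi v == i) val Fy0.
by apply: (optimal_card_X lab mono i_ge2 Fy _ opt) => v /eqP /ymin.
Qed.

Theorem lemma4p9 (n k : nat) (phi : 'I_n -> 'I_n -> nat) :
  2 <= k -> is_optimal k phi ->
  forall i, 2 <= i <= k ->
    #|X phi i| + #|X phi i.+1| <= #|X phi (i - 2)| + #|X phi i.-1| + 2.
Proof.
move=> _ opt i /andP[i_ge2 _].
have [Xi0 | /(optimal_card_X_nonempty opt i_ge2)//] := eqVneq (X phi i) set0.
rewrite Xi0 cards0 add0n.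
have [-> | Xi1] := eqVneq (X phi i.+1) set0; first by rewrite cards0.
have := optimal_card_X_nonempty opt (leqW i_ge2) Xi1.
by rewrite subSS subn1 /= Xi0 cards0; lia.
Qed.
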